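(* For every object $\bar d=\{1,\dots,d\}$ of the augmented simplex category, the following assignment on generators defines an opposite $\mathcal{S}$-bialgebra structure, i.e. a prop morphism $\mathcal{S}\to\mathrm{End}^{\mathrm{op}}(\mathrm{C}^a_\bullet(\Delta^d_+))$, natural with respect to augmented simplicial maps: (i) $\varepsilon\mapsto$ the map in $\mathrm{Hom}(k,\mathrm{C}^a_\bullet(\Delta^d_+))_0$ given by $1\mapsto[\emptyset]$; (ii) $\Delta\mapsto$ the join map in $\mathrm{Hom}(\mathrm{C}^a_\bullet(\Delta^d_+)^{\otimes2},\mathrm{C}^a_\bullet(\Delta^d_+))_0$, $[v_0,\dots,v_p]\otimes[v_{p+1},\dots,v_q]\mapsto\mathrm{sign}(\pi)\,[v_{\pi(0)},\dots,v_{\pi(q)}]$ if the vertices are pairwise distinct and $\mapsto0$ otherwise, where $\pi$ is the permutation ordering the vertices increasingly; (iii) $\mu\mapsto$ the map in $\mathrm{Hom}(\mathrm{C}^a_\bullet(\Delta^d_+),\mathrm{C}^a_\bullet(\Delta^d_+)^{\otimes2})_1$, $[v_0,\dots,v_q]\mapsto\sum_{i=0}^q(-1)^i[v_0,\dots,v_i]\otimes[v_i,\dots,v_q]$ (and $[\emptyset]\mapsto0$).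
   Context: Fix a commutative ring $k$; chain complexes over $k$ with the Koszul sign rule. A prop $\mathcal{P}$ is a strict symmetric monoidal category enriched in chain complexes generated by one object, $\mathcal{P}(n,m)$ the complex of morphisms from $n$ to $m$ copies; $\circ$ vertical, $\otimes$ horizontal composition, $\mathrm{id}\in\mathcal{P}(1,1)$. For a chain complex $C$, $\mathrm{End}^{\mathrm{op}}(C)$ is the prop with $\mathrm{End}^{\mathrm{op}}(C)(n,m)=\mathrm{Hom}(C^{\otimes m},C^{\otimes n})$ (Hom complex with $(\partial f)=\partial\circ f-(-1)^{|f|}f\circ\partial$); a prop morphism $\mathcal{P}\to\mathrm{End}^{\mathrm{op}}(C)$ is an opposite $\mathcal{P}$-bialgebra. The prop $\mathcal{S}$: free prop on the free $\Sigma$-bimodule generated by $\varepsilon\in\mathcal{S}(1,0)_0$, $\Delta\in\mathcal{S}(1,2)_0$, $\mu\in\mathcal{S}(2,1)_1$, with derivation differential $\partial\varepsilon=0$, $\partial\Delta=0$, $\partial\mu=(\varepsilon\otimes\mathrm{id})-(\mathrm{id}\otimes\varepsilon)$, modulo the dg prop ideal generated by $\varepsilon\circ\mu$, $(\varepsilon\otimes\mathrm{id})\circ\Delta-\mathrm{id}$, $(\mathrm{id}\otimes\varepsilon)\circ\Delta-\mathrm{id}$. The augmented simplex category $\Delta_+$ has objects $\bar0=\emptyset,\bar1=\{1\},\bar2=\{1,2\},\dots$ and order-preserving maps. $\mathrm{C}^a_\bullet(\Delta^d_+)$ is the normalized augmented chain complex of the standard augmented simplex on $\bar d$: basis the symbols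 $[v_0,\dots,v_q]$ for strictly increasing sequences of elements of $\bar d$, including the empty simplex $[\emptyset]$, graded by cardinality (so $[\emptyset]$ has degree $0$ and $[v_0,\dots,v_q]$ degree $q+1$), symbols with repeated vertices being $0$, with differential $\partial[v_0,\dots,v_q]=\sum_i(-1)^i[v_0,\dots,\widehat{v_i},\dots,v_q]$, in particular $\partial[v]=[\emptyset]$. Naturality means compatibility with the chain maps induced by order-preserving maps $\bar d\to\bar e$. *)

From HB Require Import structures.
From mathcomp Require Import all_boot all_order all_algebra.
Set Implicit Arguments. Unset Strict Implicit. Unset Printing Implicit Defensive.
Import GRing.Theory.
Local Open Scope ring_scope.

(* Free graded k-modules with a finite basis B are represented as
   coordinate vectors {ffun B -> k}; k-linear maps are given by their
   values on basis vectors and extended linearly. *)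
Notation vec k B := ({ffun B -> GRing.ComPzRing.sort k}) (only parsing).

Section Free.
Variable k : comPzRingType.


Definition bv (B : finType) (b : B) : vec k B := [ffun b' => (b' == b)%:R].

Definition ext (B1 B2 : finType) (f : B1 -> vec k B2) (x : vec k B1) : vec k B2 :=
  [ffun b2 => \sum_(b : B1) x b * f b b2].

Definition scl (B : finType) (c : k) (x : vec k B) : vec k B :=
  [ffun b => c * x b].

Definition tens (B1 B2 : finType) (x : vec k B1) (y : vec k B2) : vec k (B1 * B2) :=
  [ffun p => x p.1 * y p.2].

Definition homog (B1 B2 : finType) (deg1 : B1 -> nat) (deg2 : B2 -> nat)
  (n : nat) (f : B1 -> vec k B2) :=
  forall b b', f b b' != 0 -> deg2 b' = (deg1 b + n)%N.

(* Differential of C (x) C with the Koszul sign rule, on basis elements *)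
Definition bd2 (B : finType) (deg : B -> nat) (bd : B -> vec k B) (p : B * B)
  : vec k (B * B) :=
  tens (bd p.1) (bv p.2) + scl ((-1) ^+ deg p.1) (tens (bv p.1) (bd p.2)).

(* An opposite S-bialgebra structure on the free chain complex (B, deg, bd),
   i.e. a prop morphism S -> End^op(C), given by the images of the
   generators eps : k -> C (degree 0), Delta : C(x)C -> C (degree 0),
   mu : C -> C(x)C (degree 1).  The basis of k = C^{(x)0} is unit.
   Since S is the free prop on eps, Delta, mu modulo the dg ideal generated
   by the three relations, such a morphism is exactly an assignment of
   maps of the right degrees commuting with the differentials as
   prescribed and satisfying the relations. *)
Definition opp_S_bialgebra (B : finType) (deg : B -> nat) (bd : B -> vec k B)
  (eps : unit -> vec k B) (Delta : B * B -> vec k B) (mu : B -> vec k (B * B)) :=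
  [/\ homog (fun _ => 0%N) deg 0 eps,
      homog (fun p => deg p.1 + deg p.2)%N deg 0 Delta &
      homog deg (fun p => deg p.1 + deg p.2)%N 1 mu] /\
  [/\
      ext bd (eps tt) = 0,
      (forall p, ext bd (Delta p) = ext Delta (bd2 deg bd p)) &
      (* d mu = (eps (x) id) - (id (x) eps) :
         (d mu) = bd2 o mu - (-1)^1 mu o bd *)
      (forall b, ext (bd2 deg bd) (mu b) + ext mu (bd b)
                 = tens (eps tt) (bv b) - tens (bv b) (eps tt))] /\
  (* relations: images of eps o mu, (eps (x) id) o Delta - id,
     (id (x) eps) o Delta - id in End^op vanish *)
  [/\ ext mu (eps tt) = 0,
      (forall b, ext Delta (tens (eps tt) (bv b)) = bv b) &
      (forall b, ext Delta (tens (bv b) (eps tt)) = bv b)].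

End Free.

(* Vertex set dbar = {1,..,d} is 'I_d; a simplex [v_0,...,v_q] with
   v_0 < ... < v_q is the set {v_0,...,v_q}; [emptyset] is set0. *)
Definition simp (d : nat) := {set 'I_d}.

Definition verts (d : nat) (S : simp d) : seq 'I_d :=
  [seq v <- enum 'I_d | v \in S].

Definition sdeg (d : nat) (S : simp d) : nat := #|S|.

(* number of inversions of a sequence of vertices; (-1)^inversions is the
   sign of the permutation ordering it increasingly *)
Definition inversions (d : nat) (s : seq 'I_d) : nat :=
  let t := map val s in
  #|[set ij : 'I_(size s) * 'I_(size s) |
      (ij.1 < ij.2)%N && (nth 0%N t ij.2 < nth 0%N t ij.1)%N]|.

Section Chains.
Variable k : comPzRingType.
Local Notation C d := (vec k (simp d)).

Definition sbd (d : nat) (S : simp d) : C d :=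
  \sum_(v <- verts S) scl ((-1) ^+ index v (verts S)) (bv k (S :\ v)).

Definition seps (d : nat) (_ : unit) : C d := bv k (set0 : simp d).

Definition sjoin (d : nat) (p : simp d * simp d) : C d :=
  if [disjoint p.1 & p.2]
  then scl ((-1) ^+ inversions (verts p.1 ++ verts p.2)) (bv k (p.1 :|: p.2))
  else 0.

Definition smu (d : nat) (S : simp d) : vec k (simp d * simp d) :=
  \sum_(v <- verts S) scl ((-1) ^+ index v (verts S))
     (tens (bv k [set u in S | (u <= v)%N]) (bv k [set u in S | (v <= u)%N])).

(* chain map induced by an order-preserving f : dbar -> ebar on normalized
   chains: [v_0..v_q] |-> [f v_0 .. f v_q], which is 0 when degenerate *)
Definition sfun (d e : nat) (f : 'I_d -> 'I_e) (S : simp d) : C e :=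
  if #|f @: S| == #|S| then bv k (f @: S) else 0.

End Chains.

(* For an arbitrary sequence s of vertices let [s] be the oriented simplex it spans:
   zero if a vertex repeats, otherwise the sorted simplex signed by the sorting
   permutation.  Then [x :: s] is the cone of x over [s], and coning with x is a
   contracting homotopy of the augmented chains, d (x * c) + x * d c = c.  Induction
   on s along this homotopy gives d [s] = sum_i (-1)^i [s without s_i] for every
   sequence, not only increasing ones.  As the join is concatenation,
   [s ++ t] = Delta ([s] (x) [t]), this formula for s ++ t is the Leibniz rule,
   i.e. d Delta = 0.  The same induction, with the homotopy "cone on the first
   factor" of C (x) C, gives d mu + mu d = [] (x) id - id (x) [].  The counit
   relations are immediate, and naturality holds because an order-preserving map
   sends [s] to [f s], both sides vanishing when f identifies two vertices. *)

From HB Require Import structures.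
From mathcomp Require Import all_boot all_order all_algebra.
From mathcomp Require Import ring zify.
Import GRing.Theory.
Local Open Scope ring_scope.
Set Implicit Arguments. Unset Strict Implicit. Unset Printing Implicit Defensive.

Local Notation ltI n := (relpre (@nat_of_ord n) ltn).
Local Notation leI n := (relpre (@nat_of_ord n) leq).

Section FreeModule.
Variable k : comPzRingType.
Implicit Types (B : finType) (c : k).

Lemma scl_is_additive B c : zmod_morphism (@scl k B c).
Proof. by move=> x y; apply/ffunP=> b; rewrite !ffunE mulrBr. Qed.
HB.instance Definition _ B c :=
  GRing.isZmodMorphism.Build _ _ (@scl k B c) (scl_is_additive c).

Lemma sclA B c c' (x : {ffun B -> k}) : scl c (scl c' x) = scl (c * c') x.
Proof. by apply/ffunP=> b; rewrite !ffunE mulrA. Qed.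

Lemma scl1r B (x : {ffun B -> k}) : scl 1 x = x.
Proof. by apply/ffunP=> b; rewrite !ffunE mul1r. Qed.

Lemma sclNr B c (x : {ffun B -> k}) : scl (- c) x = - scl c x.
Proof. by apply/ffunP=> b; rewrite !ffunE mulNr. Qed.

Lemma extE (B1 B2 : finType) (f : B1 -> {ffun B2 -> k}) x :
  ext f x = \sum_b scl (x b) (f b).
Proof.
by apply/ffunP=> b; rewrite ffunE sum_ffunE; apply: eq_bigr => a _; rewrite ffunE.
Qed.

Lemma ext_is_additive (B1 B2 : finType) (f : B1 -> {ffun B2 -> k}) : zmod_morphism (ext f).
Proof.
move=> x y; apply/ffunP=> b; rewrite !ffunE -sumrB.
by apply: eq_bigr => a _; rewrite !ffunE mulrBl.
Qed.
HB.instance Definition _ (B1 B2 : finType) (f : B1 -> {ffun B2 -> k}) :=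
  GRing.isZmodMorphism.Build _ _ (ext f) (ext_is_additive f).

Section Extension.
Variables B1 B2 : finType.
Implicit Types f g : B1 -> {ffun B2 -> k}.

Lemma ext_scl f c x : ext f (scl c x) = scl c (ext f x).
Proof.
by apply/ffunP=> b; rewrite !ffunE big_distrr; apply: eq_bigr => a _; rewrite ffunE -mulrA.
Qed.

Lemma ext_bv f a : ext f (bv k a) = f a.
Proof.
rewrite extE (bigD1 a) //= big1 => [|a' /negbTE na]; last first.
  by apply/ffunP=> b; rewrite !ffunE na mul0r.
by rewrite addr0 ffunE eqxx scl1r.
Qed.

Lemma eq_ext f g : f =1 g -> ext f =1 ext g.
Proof. by move=> fg x; rewrite !extE; apply: eq_bigr => a _; rewrite fg. Qed.

Lemma ext_bv_id x : ext (@bv k B1) x = x.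
Proof.
apply/ffunP=> a; rewrite ffunE (bigD1 a) //= big1 => [|a' /negbTE na].
  by rewrite ffunE eqxx mulr1 addr0.
by rewrite ffunE eq_sym na mulr0.
Qed.

Lemma ext_addf f g x : ext (fun a => f a + g a) x = ext f x + ext g x.
Proof. by rewrite !extE -big_split; apply: eq_bigr => a _; rewrite raddfD. Qed.

Lemma ext_sclf f c x : ext (fun a => scl c (f a)) x = scl c (ext f x).
Proof. by rewrite !extE raddf_sum; apply: eq_bigr => a _ /=; rewrite !sclA mulrC. Qed.

End Extension.

Lemma ext_comp (B1 B2 B3 : finType) (f : B2 -> {ffun B3 -> k})
    (g : B1 -> {ffun B2 -> k}) x :
  ext f (ext g x) = ext (fun b => ext f (g b)) x.
Proof.
rewrite [ext g x]extE raddf_sum [RHS]extE.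
by apply: eq_bigr => b _ /=; rewrite ext_scl.
Qed.

Lemma ext_homotopy B (bd h : B -> {ffun B -> k}) :
    (forall b, ext bd (h b) + ext h (bd b) = bv k b) ->
  forall x, ext bd (ext h x) + ext h (ext bd x) = x.
Proof.
by move=> hbd x; rewrite !ext_comp -ext_addf -[RHS]ext_bv_id; apply: eq_ext.
Qed.

Lemma tens_is_additive B1 B2 (x : {ffun B1 -> k}) : zmod_morphism (@tens k B1 B2 x).
Proof. by move=> y z; apply/ffunP=> p; rewrite !ffunE mulrBr. Qed.
HB.instance Definition _ B1 B2 (x : {ffun B1 -> k}) :=
  GRing.isZmodMorphism.Build _ _ (@tens k B1 B2 x) (tens_is_additive x).

Section Tensor.
Variables B1 B2 : finType.
Implicit Types (x : {ffun B1 -> k}) (y : {ffun B2 -> k}).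

Lemma tensDl x x' y : tens (x + x') y = tens x y + tens x' y.
Proof. by apply/ffunP=> p; rewrite !ffunE mulrDl. Qed.

Lemma tens0l y : tens (0 : {ffun B1 -> k}) y = 0.
Proof. by apply/ffunP=> p; rewrite !ffunE mul0r. Qed.

Lemma tens_scll c x y : tens (scl c x) y = scl c (tens x y).
Proof. by apply/ffunP=> p; rewrite !ffunE mulrA. Qed.

Lemma tens_sclr c x y : tens x (scl c y) = scl c (tens x y).
Proof. by apply/ffunP=> p; rewrite !ffunE mulrCA. Qed.

Lemma tens_bv (a : B1) (b : B2) : tens (bv k a) (bv k b) = bv k (a, b).
Proof.
apply/ffunP=> -[a' b']; rewrite !ffunE /= xpair_eqE.
by rewrite -natrM mulnb.
Qed.

Lemma ext_tensl (B3 : finType) (f : B3 -> {ffun B1 -> k}) z y :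
  ext (fun a => tens (f a) y) z = tens (ext f z) y.
Proof.
rewrite !extE; elim/big_rec2: _ => [|a u v _ ->]; first by rewrite tens0l.
by rewrite tensDl tens_scll.
Qed.

Lemma ext_tensr (B3 : finType) (f : B3 -> {ffun B2 -> k}) z x :
  ext (fun a => tens x (f a)) z = tens x (ext f z).
Proof. by rewrite !extE raddf_sum; apply: eq_bigr => a _ /=; rewrite tens_sclr. Qed.

Lemma ext_tens (B3 : finType) (f : B1 * B2 -> {ffun B3 -> k}) x y :
  ext f (tens x y) = ext (fun a => ext (fun b => f (a, b)) y) x.
Proof.
rewrite extE [RHS]extE (eq_bigr (fun a => \sum_b scl (x a * y b) (f (a, b)))).
  by rewrite pair_big; apply: eq_bigr => -[a b] _; rewrite ffunE.
by move=> a _; rewrite extE raddf_sum; apply: eq_bigr => b _ /=; rewrite sclA.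
Qed.

End Tensor.

Lemma ext_tens_tens (B1 B2 B3 B4 : finType) (g : B3 -> {ffun B1 -> k})
    (h : B4 -> {ffun B2 -> k}) (z : {ffun B3 -> k}) (w : {ffun B4 -> k}) :
  ext (fun p => tens (g p.1) (h p.2)) (tens z w) = tens (ext g z) (ext h w).
Proof. by rewrite ext_tens /= -ext_tensl; apply: eq_ext => a; rewrite ext_tensr. Qed.

End FreeModule.

Lemma sorted_take_drop (T : Type) (r : rel T) (x0 : T) (t : seq T) i : (i < size t)%N ->
  sorted r (take i.+1 t) -> sorted r (drop i t) -> sorted r t.
Proof.
move=> lti; rewrite (take_nth x0 lti) (drop_nth x0 lti) => st /= sd.
by rewrite -(cat_take_drop i t) (drop_nth x0 lti) sorted_cat_cons st.
Qed.

Section Vertices.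
Variable d : nat.
Implicit Types (S U : simp d) (s : seq 'I_d) (u v x : 'I_d).

Lemma ltI_trans : transitive (ltI d).
Proof. by move=> v u w /= /ltn_trans; apply. Qed.

Lemma verts_uniq S : uniq (verts S).
Proof. by rewrite filter_uniq // enum_uniq. Qed.

Lemma mem_verts S v : (v \in verts S) = (v \in S).
Proof. by rewrite mem_filter mem_enum andbT. Qed.

Lemma verts_sorted S : sorted (ltI d) (verts S).
Proof.
apply: sorted_filter; first exact: ltI_trans.
by rewrite -sorted_map val_enum_ord iota_ltn_sorted.
Qed.

Lemma set_verts S : [set v in verts S] = S.
Proof. by apply/setP=> v; rewrite inE mem_verts. Qed.

Lemma card_set_seq s : uniq s -> #|[set v in s]| = size s.
Proof. by move=> us; rewrite cardsE; apply/card_uniqP. Qed.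

Lemma size_verts S : size (verts S) = #|S|.
Proof. by rewrite -card_set_seq ?verts_uniq // set_verts. Qed.

Lemma verts_filter S (P : pred 'I_d) : verts [set u in S | P u] = filter P (verts S).
Proof. by rewrite -filter_predI; apply: eq_filter => u; rewrite !inE andbC. Qed.

Lemma verts_D1 S v : verts (S :\ v) = filter (predC1 v) (verts S).
Proof. by rewrite -verts_filter; congr verts; apply/setP=> u; rewrite !inE andbC. Qed.

Lemma verts_set0 : verts (set0 : simp d) = [::].
Proof. by apply/eqP; rewrite -size_eq0 size_verts cards0. Qed.

Lemma index_sorted s v : sorted (ltI d) s -> v \in s ->
  index v s = count (fun u : 'I_d => u < v)%N s.
Proof.
elim: s => [//|u s IHs] /=; rewrite (path_sortedE ltI_trans) => /andP [/allP ltu ss].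
rewrite in_cons eq_sym; case: eqP => [<- _|_ /= vs].
  rewrite ltnn (@eq_in_count _ _ pred0) ?count_pred0 // => w /ltu /= ltuw.
  by rewrite ltnNge ltnW.
by have /= ltuv := ltu v vs; rewrite IHs // ltuv.
Qed.

Lemma take_sorted x0 s i : sorted (ltI d) s -> (i < size s)%N ->
  take i.+1 s = filter (fun u : 'I_d => u <= nth x0 s i)%N s.
Proof.
elim: s i => [//|y s IHs] [|i] /=;
  rewrite (path_sortedE ltI_trans) => /andP [/allP lty ss] lti.
  rewrite take0 leqnn (@eq_in_filter _ _ pred0) ?filter_pred0 // => u /lty /= ltyu.
  by rewrite leqNgt ltyu.
by have /= /ltnW le_y := lty _ (mem_nth x0 lti); rewrite IHs // le_y.
Qed.

Lemma drop_sorted x0 s i : sorted (ltI d) s -> (i < size s)%N ->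
  drop i s = filter (fun u : 'I_d => nth x0 s i <= u)%N s.
Proof.
elim: s i => [//|y s IHs] [|i] /=;
  rewrite (path_sortedE ltI_trans) => /andP [/allP lty ss] lti.
  by rewrite leqnn; congr (_ :: _); apply/esym/all_filterP/allP => u /lty /ltnW.
by have /= lt_y := lty _ (mem_nth x0 lti); rewrite IHs // leqNgt lt_y.
Qed.

Definition nbelow S v := #|[set u in S | u < v]%N|.

Lemma nbelow_seq s v : uniq s ->
  nbelow [set u in s] v = count (fun u : 'I_d => u < v)%N s.
Proof.
move=> us; rewrite /nbelow -size_filter -card_set_seq ?filter_uniq //.
by apply: eq_card => u; rewrite !inE mem_filter andbC.
Qed.

Lemma index_verts S v : v \in S -> index v (verts S) = nbelow S v.
Proof.
move=> vS; rewrite index_sorted ?verts_sorted ?mem_verts // -nbelow_seq ?verts_uniq //.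
by rewrite set_verts.
Qed.

Lemma nbelow_set0 v : nbelow set0 v = 0%N.
Proof. by apply: eq_card0 => u; rewrite !inE. Qed.

Lemma nbelowD1 U v x : v \in U -> nbelow U x = ((v < x) + nbelow (U :\ v) x)%N.
Proof.
move=> vU; rewrite /nbelow; case: ltnP => [ltvx|gevx].
  rewrite (_ : [set u in U | u < x]%N = v |: [set u in U :\ v | u < x]%N).
    by rewrite cardsU1 !inE eqxx.
  by apply/setP=> u; rewrite !inE; case: eqP => [->|]; rewrite ?vU ?ltvx.
apply: eq_card => u; rewrite !inE; case: eqP => [->|//].
by rewrite ltnNge gevx andbF.
Qed.

End Vertices.

Section Cone.
Variables (k : comPzRingType) (d : nat).
Implicit Types (S U : simp d) (x v : 'I_d).
Local Notation sbd := (@sbd k d).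

Lemma sbdE S : sbd S = \sum_(v in S) scl ((-1) ^+ nbelow S v) (bv k (S :\ v)).
Proof.
rewrite /sbd {1}/verts big_filter big_enum_cond /=.
by apply: eq_big => [v|v vS]; rewrite ?index_verts.
Qed.

Lemma sbd_set0 : sbd set0 = 0.
Proof. by rewrite sbdE big_pred0 // => v; rewrite inE. Qed.

Definition cone x U : {ffun simp d -> k} :=
  if x \in U then 0 else scl ((-1) ^+ nbelow U x) (bv k (x |: U)).

Lemma sbd_cone_bv x U : ext sbd (cone x U) + ext (cone x) (sbd U) = bv k U.
Proof.
have nbelow_xx (V : simp d) : x \in V -> nbelow V x = nbelow (V :\ x) x.
  by move/nbelowD1 ->; rewrite ltnn.
rewrite sbdE raddf_sum /=; under eq_bigr => v _ do rewrite ext_scl ext_bv.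
rewrite /cone; case: ifPn => [xU | xNU].
  rewrite raddf0 add0r (bigD1 x) //= big1 => [|v /andP [vU vx]]; last first.
    by rewrite !inE eq_sym vx xU raddf0.
  by rewrite addr0 !inE eqxx /= sclA -nbelow_xx // -expr2 sqrr_sign scl1r setD1K.
rewrite ext_scl ext_bv sbdE (bigD1 x) ?setU11 //= (nbelow_xx (x |: U)) ?setU11 // setU1K //.
rewrite raddfD /= sclA -expr2 sqrr_sign scl1r -addrA addrC -[RHS]add0r; congr (_ + _).
rewrite raddf_sum /= (eq_bigl (fun v => v \in U)) => [|v]; last first.
  by rewrite !inE; case: eqP => [->|_]; rewrite ?andbF ?andbT ?(negbTE xNU).
rewrite -big_split big1 //= => v vU.
have vNx : v != x by apply: contraNneq xNU => <-.
have -> : (x |: U) :\ v = x |: U :\ v.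
  by apply/setP=> u; rewrite !inE; case: (u =P x) => [->|]; rewrite // eq_sym vNx.
rewrite !inE (negbTE xNU) andbF !sclA.
(* Adding x and deleting v in either order differ by (-1)^([v < x] + [x < v]) = -1. *)
apply/eqP; rewrite addr_eq0 -sclNr; apply/eqP; congr scl.
rewrite (nbelowD1 x vU) (nbelowD1 v (setU11 x U)) setU1K // !exprD.
have [ltvx|ltxv|/val_inj eq_vx] := ltngtP v x; last by rewrite eq_vx eqxx in vNx.
all: by rewrite /= ?expr0 ?expr1; ring.
Qed.

Lemma cone_set0 x : cone x set0 = bv k [set x].
Proof. by rewrite /cone inE nbelow_set0 expr0 scl1r setU0. Qed.

Lemma sbd_set1 x : sbd [set x] = bv k set0.
Proof.
by rewrite sbdE big_set1 (nbelowD1 x (set11 x)) ltnn setDv nbelow_set0 expr0 scl1r.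
Qed.

Lemma sbd_cone x y : ext sbd (ext (cone x) y) + ext (cone x) (ext sbd y) = y.
Proof. exact/ext_homotopy/sbd_cone_bv. Qed.

End Cone.

Lemma card_inversion_pairs n (t : seq nat) :
  #|[set ij : 'I_n * 'I_n | (ij.1 < ij.2) && (nth 0 t ij.2 < nth 0 t ij.1)]%N|
  = (\sum_(i < n) \sum_(j < n) ((i < j) && (nth 0 t j < nth 0 t i)))%N.
Proof.
by rewrite -sum1dep_card pair_bigA big_mkcond; apply: eq_bigr => -[i j] _; case: ifP.
Qed.

Section SignedSimplex.
Variables (k : comPzRingType) (d : nat).
Implicit Types (S T : simp d) (s t : seq 'I_d) (x : 'I_d).
Local Notation sbd := (@sbd k d).

Lemma inversions_cons x s :
  inversions (x :: s) = (count (fun y : 'I_d => y < x) s + inversions s)%N.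
Proof.
rewrite /inversions /= !card_inversion_pairs big_ord_recl big_ord_recl /=.
congr (_ + _)%N; last by apply: eq_bigr => i _; rewrite big_ord_recl.
rewrite -(size_map val) -(count_map val (fun y => y < x)%N).
elim: (map val s) => [|y t IHt]; first by rewrite big_ord0.
by rewrite big_ord_recl /= -IHt.
Qed.

Lemma inversions_nil : inversions ([::] : seq 'I_d) = 0%N.
Proof. by rewrite /inversions card_inversion_pairs big_ord0. Qed.

Lemma inversions_sorted s : sorted (ltI d) s -> inversions s = 0%N.
Proof.
elim: s => [|x s IHs /=]; first by rewrite inversions_nil.
rewrite (path_sortedE (@ltI_trans d)) inversions_cons => /andP [/allP ltx ss].
rewrite IHs // addn0 (@eq_in_count _ _ pred0) ?count_pred0 // => y /ltx /= ltxy.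
by rewrite ltnNge ltnW.
Qed.

Definition simplex s : {ffun simp d -> k} :=
  if uniq s then scl ((-1) ^+ inversions s) (bv k [set x in s]) else 0.

Lemma simplex_verts S : simplex (verts S) = bv k S.
Proof.
by rewrite /simplex verts_uniq inversions_sorted ?verts_sorted // set_verts scl1r.
Qed.

Lemma simplex_nil : simplex [::] = bv k set0.
Proof. by rewrite -verts_set0 simplex_verts. Qed.

Lemma simplex_cons x s : simplex (x :: s) = ext (cone k x) (simplex s).
Proof.
rewrite /simplex /=; case: (boolP (uniq s)) => [us|_]; last by rewrite andbF raddf0.
rewrite andbT ext_scl ext_bv /cone inE.
case: (boolP (x \in s)) => /= xs; first by rewrite raddf0.
rewrite sclA inversions_cons exprD mulrC nbelow_seq //.
by congr (scl _ (bv k _)); apply/setP=> u; rewrite !inE.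
Qed.

Definition rem_at i s := take i s ++ drop i.+1 s.

Lemma rem_at_uniq x0 i s : uniq s -> (i < size s)%N ->
  rem_at i s = filter (predC1 (nth x0 s i)) s.
Proof.
elim: s i => [//|y s IHs] [|i] /= /andP [ys us] lti.
  rewrite /rem_at /= drop0 eqxx; apply/esym/all_filterP/allP => z zs /=.
  by apply: contraNneq ys => <-.
rewrite /rem_at /= -/(rem_at i s) IHs //.
by have -> : y != nth x0 s i by apply: contraNneq ys => ->; rewrite mem_nth.
Qed.

Definition face_sum (B : finType) (F : seq 'I_d -> {ffun B -> k}) s :=
  \sum_(0 <= i < size s) scl ((-1) ^+ i) (F (rem_at i s)).

Lemma face_sum_nil (B : finType) (F : seq 'I_d -> {ffun B -> k}) : face_sum F [::] = 0.
Proof. by rewrite /face_sum big_geq. Qed.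

Lemma eq_face_sum (B : finType) (F G : seq 'I_d -> {ffun B -> k}) :
  F =1 G -> face_sum F =1 face_sum G.
Proof. by move=> FG s; apply: eq_bigr => i _; rewrite FG. Qed.

Lemma face_sum_cons (B : finType) (F : seq 'I_d -> {ffun B -> k}) x s :
  face_sum F (x :: s) = F s - face_sum (F \o cons x) s.
Proof.
rewrite /face_sum /= big_nat_recl // expr0 scl1r /rem_at /= drop0 -sumrN.
by congr (_ + _); apply: eq_bigr => i _; rewrite exprS mulN1r sclNr.
Qed.

Lemma face_sum_ext (B B' : finType) (f : B -> {ffun B' -> k}) F s :
  face_sum (fun t => ext f (F t)) s = ext f (face_sum F s).
Proof. by rewrite /face_sum raddf_sum; apply: eq_bigr => i _ /=; rewrite ext_scl. Qed.

Lemma face_sum_verts (B : finType) (F : seq 'I_d -> {ffun B -> k}) S :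
  face_sum F (verts S) = ext (fun T => F (verts T)) (sbd S).
Proof.
rewrite /sbd raddf_sum /=; case def_s: (verts S) => [|x0 s].
  by rewrite big_nil face_sum_nil.
rewrite -def_s (big_nth x0) /face_sum; apply: eq_big_nat => i /andP [_ lti].
by rewrite ext_scl ext_bv index_uniq ?verts_uniq // verts_D1 -rem_at_uniq ?verts_uniq.
Qed.

Lemma sbd_simplex s : ext sbd (simplex s) = face_sum simplex s.
Proof.
elim: s => [|x s IHs]; first by rewrite simplex_nil ext_bv sbd_set0 face_sum_nil.
rewrite simplex_cons face_sum_cons (eq_face_sum (simplex_cons x)) face_sum_ext -IHs.
by apply/eqP; rewrite eq_sym subr_eq sbd_cone.
Qed.

Lemma face_sum_simplex_verts S : face_sum simplex (verts S) = sbd S.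
Proof. by rewrite face_sum_verts (eq_ext simplex_verts) ext_bv_id. Qed.

Lemma face_sumB (B : finType) (F G : seq 'I_d -> {ffun B -> k}) s :
  face_sum (fun t => F t - G t) s = face_sum F s - face_sum G s.
Proof. by rewrite /face_sum -sumrB; apply: eq_bigr => i _; rewrite raddfB. Qed.

Lemma face_sum_tensl (B B' : finType) (F : seq 'I_d -> {ffun B -> k})
    (y : {ffun B' -> k}) s :
  face_sum (fun t => tens (F t) y) s = tens (face_sum F s) y.
Proof.
rewrite /face_sum; elim/big_rec2: _ => [|i u v _ ->]; first by rewrite tens0l.
by rewrite tensDl tens_scll.
Qed.

Lemma face_sum_tensr (B B' : finType) (F : seq 'I_d -> {ffun B' -> k})
    (x : {ffun B -> k}) s :
  face_sum (fun t => tens x (F t)) s = tens x (face_sum F s).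
Proof. by rewrite /face_sum raddf_sum; apply: eq_bigr => i _ /=; rewrite tens_sclr. Qed.

Lemma rem_at_catl i s t : (i < size s)%N -> rem_at i (s ++ t) = rem_at i s ++ t.
Proof.
move=> lti; rewrite /rem_at take_cat drop_cat lti -catA; case: ltnP => // ge_i1.
by rewrite (_ : i.+1 = size s) ?subnn ?drop0 ?drop_size //; apply/eqP; rewrite eqn_leq lti.
Qed.

Lemma rem_at_catr i s t : rem_at (size s + i) (s ++ t) = s ++ rem_at i t.
Proof.
rewrite /rem_at take_cat drop_cat ltnNge leq_addr -addnS ltnNge leq_addr /=.
by rewrite !addKn catA.
Qed.

Lemma face_sum_cat (B : finType) (F : seq 'I_d -> {ffun B -> k}) s t :
  face_sum F (s ++ t) =
  face_sum (fun u => F (u ++ t)) s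
  + scl ((-1) ^+ size s) (face_sum (fun u => F (s ++ u)) t).
Proof.
rewrite /face_sum size_cat (big_cat_nat _ (leq_addr _ _)) //=; congr (_ + _).
  by apply: eq_big_nat => i /andP [_ lti]; rewrite rem_at_catl.
rewrite -{1}(add0n (size s)) big_addn addKn raddf_sum; apply: eq_bigr => i _ /=.
by rewrite sclA -exprD addnC rem_at_catr.
Qed.

End SignedSimplex.

Section Join.
Variables (k : comPzRingType) (d : nat).
Implicit Types (S T : simp d) (s t : seq 'I_d).
Local Notation simplex := (@simplex k d).
Local Notation sjoin := (@sjoin k d).

Definition cross s t := (\sum_(x <- s) count (fun y : 'I_d => y < x) t)%N.

Lemma inversions_cat s t :
  inversions (s ++ t) = (inversions s + inversions t + cross s t)%N.
Proof.
elim: s => [|x s IHs] /=; first by rewrite inversions_nil /cross big_nil addn0.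
by rewrite !inversions_cons IHs count_cat /cross big_cons; lia.
Qed.

Lemma perm_cross s s' t t' : perm_eq s s' -> perm_eq t t' -> cross s t = cross s' t'.
Proof.
by move=> ss' tt'; rewrite /cross (perm_big _ ss'); apply: eq_bigr => x _; apply: permP.
Qed.

Lemma perm_verts_set s : uniq s -> perm_eq s (verts [set x in s]).
Proof. by move=> us; apply: uniq_perm (verts_uniq _) _ => // x; rewrite mem_verts inE. Qed.

Lemma sjoin_simplex S T : sjoin (S, T) = simplex (verts S ++ verts T).
Proof.
rewrite /sjoin /simplex /= cat_uniq !verts_uniq /= andbT.
have -> : [disjoint S & T] = ~~ has (mem (verts S)) (verts T).
  rewrite disjoint_sym -(eq_disjoint (mem_verts T)) disjoint_has.
  by congr (~~ _); apply: eq_has => x; rewrite /= mem_verts.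
case: ifP => // _; congr (scl _ (bv k _)).
by apply/setP=> x; rewrite !inE mem_cat !mem_verts.
Qed.

Lemma simplex_cat s t : simplex (s ++ t) = ext sjoin (tens (simplex s) (simplex t)).
Proof.
rewrite {2 3}/simplex; case: (boolP (uniq s)) => us; last first.
  by rewrite /simplex cat_uniq (negbTE us) tens0l raddf0.
case: (boolP (uniq t)) => ut; last first.
  by rewrite /simplex cat_uniq (negbTE ut) !andbF !raddf0.
rewrite tens_scll tens_sclr tens_bv !ext_scl ext_bv sjoin_simplex /simplex.
have mem_vs (u : seq 'I_d) : verts [set x in u] =i u by move=> x; rewrite mem_verts inE.
rewrite !cat_uniq !verts_uniq us ut /= !andbT (eq_has_r (mem_vs t)) (eq_has (mem_vs s)).
case: has; rewrite /= ?raddf0 // !sclA -!exprD !inversions_cat.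
rewrite !(inversions_sorted (verts_sorted _)) !add0n.
rewrite (perm_cross (perm_verts_set us) (perm_verts_set ut)).
by congr (scl (_ ^+ _) (bv k _)); apply/setP => x; rewrite !inE !mem_cat !mem_vs.
Qed.

Lemma sbd_sjoin p : ext (@sbd k d) (sjoin p) = ext sjoin (bd2 (@sdeg d) (@sbd k d) p).
Proof.
case: p => S T; rewrite sjoin_simplex sbd_simplex face_sum_cat.
rewrite (eq_face_sum (fun u => simplex_cat u (verts T))).
rewrite (eq_face_sum (simplex_cat (verts S))).
rewrite !face_sum_ext face_sum_tensl face_sum_tensr !face_sum_simplex_verts !simplex_verts.
by rewrite size_verts /bd2 raddfD /= ext_scl.
Qed.

End Join.

Section Coproduct.
Variables (k : comPzRingType) (d : nat).
Implicit Types (S U W : simp d) (s t : seq 'I_d) (x : 'I_d).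
Local Notation simplex := (@simplex k d).
Local Notation sbd := (@sbd k d).
Local Notation bd2 := (bd2 (@sdeg d) sbd).

Definition coprod s : {ffun simp d * simp d -> k} :=
  \sum_(0 <= i < size s)
    scl ((-1) ^+ i) (tens (simplex (take i.+1 s)) (simplex (drop i s))).

Lemma smu_coprod S : smu k S = coprod (verts S).
Proof.
rewrite /smu /coprod; case def_s: (verts S) => [|x0 s]; first by rewrite big_nil big_geq.
rewrite -def_s (big_nth x0); apply: eq_big_nat => i /andP [_ lti].
rewrite index_uniq ?verts_uniq //.
rewrite (take_sorted x0) ?verts_sorted // (drop_sorted x0) ?verts_sorted //.
by rewrite -!verts_filter !simplex_verts.
Qed.

Lemma simplex1 x : simplex [:: x] = bv k [set x].
Proof. by rewrite simplex_cons simplex_nil ext_bv cone_set0. Qed.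

Local Notation cone_left x := (ext (fun p => tens (cone k x p.1) (bv k p.2))).

Lemma cone_left_tens x y (z : {ffun simp d -> k}) :
  cone_left x (tens y z) = tens (ext (cone k x) y) z.
Proof. by rewrite ext_tens_tens ext_bv_id. Qed.

Lemma coprod_cons x s :
  coprod (x :: s) = tens (bv k [set x]) (simplex (x :: s)) - cone_left x (coprod s).
Proof.
rewrite /coprod big_nat_recl //= -/(size s) take0 simplex1 expr0 scl1r; congr (_ + _).
rewrite raddf_sum -sumrN; apply: eq_bigr => i _ /=.
by rewrite ext_scl cone_left_tens simplex_cons exprS mulN1r sclNr.
Qed.

Lemma bd2_tens_bv U y :
  ext bd2 (tens (bv k U) y) =
  tens (sbd U) y + scl ((-1) ^+ #|U|) (tens (bv k U) (ext sbd y)).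
Proof.
by rewrite ext_tens ext_bv /bd2 /= ext_addf ext_tensr ext_sclf ext_tensr ext_bv_id.
Qed.

Lemma bd2_tens_cone x U W :
  ext bd2 (tens (cone k x U) (bv k W)) =
  tens (ext sbd (cone k x U)) (bv k W) - scl ((-1) ^+ #|U|) (tens (cone k x U) (sbd W)).
Proof.
rewrite /cone; case: ifP => xU; first by rewrite !(tens0l, raddf0) addr0.
rewrite tens_scll !ext_scl bd2_tens_bv !ext_bv cardsU1 xU exprS.
by apply/ffunP => p; rewrite !ffunE; ring.
Qed.

Lemma bd2_cone_left x y : ext bd2 (cone_left x y) + cone_left x (ext bd2 y) = y.
Proof.
apply: ext_homotopy => -[U W] /=.
rewrite bd2_tens_cone /bd2 raddfD /= ext_scl !cone_left_tens.
rewrite !ext_bv -tens_bv -(sbd_cone_bv k x U) tensDl.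
by apply/ffunP => p; rewrite !ffunE /sdeg; ring.
Qed.

Lemma face_sum_coprod_cons x s :
  face_sum coprod (x :: s) =
  coprod s - tens (bv k [set x]) (ext (cone k x) (face_sum simplex s))
  + cone_left x (face_sum coprod s).
Proof.
rewrite face_sum_cons (eq_face_sum (coprod_cons x)) face_sumB face_sum_tensr.
by rewrite (eq_face_sum (simplex_cons k x)) !face_sum_ext opprB addrA addrAC.
Qed.

Lemma bd2_coprod s :
  ext bd2 (coprod s) + face_sum coprod s =
  tens (bv k set0) (simplex s) - tens (simplex s) (bv k set0).
Proof.
elim: s => [|x s IHs].
  by rewrite /coprod big_geq // face_sum_nil raddf0 add0r simplex_nil subrr.
have bd2_head : ext bd2 (tens (bv k [set x]) (simplex (x :: s))) =
    tens (bv k set0) (simplex (x :: s))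
    - tens (bv k [set x]) (simplex s - ext (cone k x) (face_sum simplex s)).
  rewrite bd2_tens_bv sbd_set1 cards1 expr1 sclNr scl1r sbd_simplex face_sum_cons.
  by rewrite (eq_face_sum (simplex_cons k x)) face_sum_ext.
have bd2_tail : ext bd2 (cone_left x (coprod s)) =
    coprod s - tens (bv k [set x]) (simplex s) + tens (simplex (x :: s)) (bv k set0)
    + cone_left x (face_sum coprod s).
  have -> : ext bd2 (cone_left x (coprod s)) = coprod s - cone_left x (ext bd2 (coprod s)).
    by apply/eqP; rewrite eq_sym subr_eq bd2_cone_left.
  rewrite -(addrK (face_sum coprod s) (ext bd2 (coprod s))) IHs.
  rewrite !raddfB /= !cone_left_tens ext_bv cone_set0 -simplex_cons.
  by apply/ffunP => p; rewrite !ffunE; ring.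
rewrite coprod_cons face_sum_coprod_cons raddfB /= bd2_head bd2_tail.
by apply/ffunP => p; rewrite !ffunE; ring.
Qed.

Lemma sbd_smu S :
  ext bd2 (smu k S) + ext (@smu k d) (sbd S) =
  tens (seps k d tt) (bv k S) - tens (bv k S) (seps k d tt).
Proof.
by rewrite smu_coprod (eq_ext smu_coprod) -face_sum_verts bd2_coprod simplex_verts.
Qed.

End Coproduct.

Section Degrees.
Variable k : comPzRingType.

Definition homogeneous (B : finType) (deg : B -> nat) n (v : {ffun B -> k}) :=
  forall b, v b != 0 -> deg b = n.

Lemma homogeneous_bv (B : finType) (deg : B -> nat) n b :
  deg b = n -> homogeneous deg n (bv k b).
Proof.
by move=> <- b'; rewrite ffunE; case: (b' =P b) => [-> //|_]; rewrite mulr0n eqxx.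
Qed.

Lemma homogeneous_scl (B : finType) (deg : B -> nat) n c v :
  homogeneous deg n v -> homogeneous deg n (scl c v).
Proof.
by move=> hv b; rewrite ffunE => cvb; apply: hv; apply: contraNneq cvb => ->; rewrite mulr0.
Qed.

Lemma homogeneous_sum (B : finType) (deg : B -> nat) n (I : eqType) (r : seq I)
    (F : I -> {ffun B -> k}) :
  (forall i, i \in r -> homogeneous deg n (F i)) -> homogeneous deg n (\sum_(i <- r) F i).
Proof.
elim: r => [_ b|i r IHr hF b]; first by rewrite big_nil ffunE eqxx.
rewrite big_cons ffunE; case: (eqVneq (F i b) 0) => [-> | /hF -> //]; last exact: mem_head.
by rewrite add0r; apply: IHr => j jr; apply: hF; rewrite in_cons jr orbT.
Qed.

Variable d : nat.

Lemma homog_seps : homog (fun _ => 0%N) (@sdeg d) 0 (@seps k d).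
Proof. by move=> []; apply: homogeneous_bv; rewrite /sdeg cards0. Qed.

Lemma homog_sjoin : homog (fun p => sdeg p.1 + sdeg p.2)%N (@sdeg d) 0 (@sjoin k d).
Proof.
move=> [S T]; rewrite /sjoin /=; case: ifPn => [ST|_ b]; last by rewrite ffunE eqxx.
apply/homogeneous_scl/homogeneous_bv.
by rewrite /sdeg cardsU (disjoint_setI0 ST) cards0 subn0 addn0.
Qed.

Lemma homog_smu : homog (@sdeg d) (fun p => sdeg p.1 + sdeg p.2)%N 1 (@smu k d).
Proof.
move=> S; apply: homogeneous_sum => v; rewrite mem_verts => vS.
rewrite tens_bv; apply/homogeneous_scl/homogeneous_bv; rewrite /sdeg /= -cardsUI.
have -> : [set u in S | u <= v]%N :|: [set u in S | v <= u]%N = S.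
  by apply/setP => u; rewrite !inE -andb_orr leq_total andbT.
have -> : [set u in S | u <= v]%N :&: [set u in S | v <= u]%N = [set v].
  apply/setP => u; rewrite !inE andbACA andbb -eqn_leq.
  by rewrite andb_idl // => /eqP/val_inj ->.
by rewrite (cards1 v) addn1.
Qed.

End Degrees.

Lemma chains_opp_S_bialgebra (k : comPzRingType) (d : nat) :
  opp_S_bialgebra (@sdeg d) (@sbd k d) (@seps k d) (@sjoin k d) (@smu k d).
Proof.
split; [split | split; split].
- exact: homog_seps.
- exact: homog_sjoin.
- exact: homog_smu.
- by rewrite /seps ext_bv sbd_set0.
- exact: sbd_sjoin.
- exact: sbd_smu.
- by rewrite /seps ext_bv /smu verts_set0 big_nil.
- by move=> S; rewrite /seps tens_bv ext_bv sjoin_simplex verts_set0 simplex_verts.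
- by move=> S; rewrite /seps tens_bv ext_bv sjoin_simplex verts_set0 cats0 simplex_verts.
Qed.

Section Naturality.
Variables (k : comPzRingType) (d e : nat) (f : 'I_d -> 'I_e).
Hypothesis f_mono : {homo f : x y / (x <= y)%N}.
Implicit Types (S T : simp d) (s : seq 'I_d).

Lemma imset_set_seq s : f @: [set x in s] = [set y in map f s].
Proof.
apply/setP => y; rewrite inE; apply/imsetP/mapP => -[x];
  by rewrite ?inE => xs ->; exists x; rewrite ?inE.
Qed.

Lemma inversions_map s : uniq (map f s) -> inversions (map f s) = inversions s.
Proof.
elim: s => [//|x s IHs] /= /andP [fxNs us].
rewrite !inversions_cons IHs // count_map; congr (_ + _)%N; apply: eq_in_count => y ys /=.
have fyNx : f y != f x by apply: contraNneq fxNs => <-; apply: map_f.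
have [ltyx|ltxy|/val_inj eq_yx] := ltngtP y x; last by rewrite eq_yx eqxx in fyNx.
  by rewrite ltn_neqAle (f_mono (ltnW ltyx)) andbT.
by rewrite ltnNge (f_mono (ltnW ltxy)).
Qed.

Lemma sfun_simplex s : ext (sfun k f) (simplex k s) = simplex k (map f s).
Proof.
rewrite {1}/simplex; case: (boolP (uniq s)) => us; last first.
  by rewrite raddf0 /simplex (negbTE (contra (@map_uniq _ _ f s) us)).
rewrite ext_scl ext_bv /sfun imset_set_seq (card_set_seq us) /simplex.
case: (boolP (uniq (map f s))) => ufs.
  by rewrite (card_set_seq ufs) size_map eqxx inversions_map.
rewrite cardsE; case: eqP => [|_]; last by rewrite raddf0.
by rewrite -(size_map f) => /card_uniqP ufs'; rewrite ufs' in ufs.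
Qed.

Lemma sfun_verts S : sfun k f S = simplex k (map f (verts S)).
Proof. by rewrite -sfun_simplex simplex_verts ext_bv. Qed.

Lemma sfun_seps : ext (sfun k f) (seps k d tt) = seps k e tt.
Proof. by rewrite /seps ext_bv /sfun imset0 !cards0. Qed.

Lemma sfun_sjoin S T :
  ext (@sjoin k e) (tens (sfun k f S) (sfun k f T)) = ext (sfun k f) (sjoin k (S, T)).
Proof. by rewrite !sfun_verts -simplex_cat sjoin_simplex sfun_simplex map_cat. Qed.

Lemma sorted_leI_uniq (u : seq 'I_e) : sorted (leI e) u -> uniq u = sorted (ltI e) u.
Proof.
move=> su; rewrite -sorted_map ltn_sorted_uniq_leq sorted_map su andbT.
by rewrite (map_inj_uniq val_inj).
Qed.

Lemma smu_simplex_map s : sorted (ltI d) s ->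
  ext (@smu k e) (simplex k (map f s)) = coprod k (map f s).
Proof.
move=> ss; have sfs : sorted (leI e) (map f s).
  by rewrite sorted_map; apply: sub_sorted ss => x y /ltnW /f_mono.
case: (boolP (uniq (map f s))) => ufs.
  have fsE : verts [set y in map f s] = map f s.
    apply: (irr_sorted_eq (@ltI_trans e) _ (verts_sorted _)).
    - by move=> y /=; rewrite ltnn.
    - by rewrite -sorted_leI_uniq.
    - by move=> y; rewrite mem_verts inE.
  by rewrite -fsE simplex_verts ext_bv smu_coprod.
(* Otherwise every term of coprod (map f s) has a repeated vertex in one factor. *)
rewrite /simplex (negbTE ufs) raddf0 /coprod big_nat big1 // => i /andP [_ lti].
have leI_trans : transitive (leI e) by move=> y x z /leq_trans; apply.
have x0 : 'I_e by move: lti; case: (map f s) => [//|y _ _]; exact: y.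
case/boolP: (uniq (take i.+1 (map f s))) => ut; last first.
  by rewrite /simplex (negbTE ut) tens0l raddf0.
case/boolP: (uniq (drop i (map f s))) => ud; last first.
  by rewrite [simplex k (drop _ _)]/simplex (negbTE ud) !raddf0.
case/negP: ufs; rewrite sorted_leI_uniq //; apply: (sorted_take_drop x0 lti).
  by rewrite -sorted_leI_uniq // (subseq_sorted leI_trans (take_subseq _ _) sfs).
by rewrite -sorted_leI_uniq // (subseq_sorted leI_trans (drop_subseq _ _) sfs).
Qed.

Lemma sfun_smu S :
  ext (fun p => tens (sfun k f p.1) (sfun k f p.2)) (smu k S) = ext (@smu k e) (sfun k f S).
Proof.
rewrite sfun_verts smu_simplex_map ?verts_sorted // smu_coprod /coprod raddf_sum size_map.
by apply: eq_bigr => i _ /=; rewrite ext_scl ext_tens_tens !sfun_simplex map_take map_drop.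
Qed.

End Naturality.

Theorem theoremB2 (k : comPzRingType) :
  (forall d : nat,
     opp_S_bialgebra (@sdeg d) (@sbd k d) (@seps k d) (@sjoin k d) (@smu k d))
  /\
  (forall (d e : nat) (f : 'I_d -> 'I_e),
     {homo f : x y / (x <= y)%N} ->
     [/\ ext (sfun k f) (seps k d tt) = seps k e tt,
         (forall S T : simp d,
            ext (@sjoin k e) (tens (sfun k f S) (sfun k f T))
            = ext (sfun k f) (sjoin k (S, T))) &
         (forall S : simp d,
            ext (fun p => tens (sfun k f p.1) (sfun k f p.2)) (smu k S)
            = ext (@smu k e) (sfun k f S))]).
Proof.
split=> [d | d e f f_mono]; first exact: chains_opp_S_bialgebra.
by split; [exact: sfun_seps | exact: sfun_sjoin | exact: sfun_smu].
Qed.
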